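(* Let $p_1>p_2$ be relatively prime positive integers. Then the set $\{S_c(p_1,p_2): c\in[0,1]\}$ of apportionment sequences of stationary divisor methods contains exactly $p_1-p_2+1$ distinct sequences.
   Context: Stationary divisor method with cut point $c\in[0,1]$ for votes $(p_1,p_2)$: seats are allocated one at a time. Initially $a_1=a_2=0$; each next seat goes to a party $i$ maximizing $p_i/(a_i+c)$, whose $a_i$ then increases by $1$. Ties are broken in favor of party $1$. For $c=0$ the convention is that $p_1/0>p_2/0$, and $p_i/0>p_j/k$ for $k>0$. $S_c(p_1,p_2)$ is the infinite sequence of party labels (in $\{1,2\}$) of successive seats. *)

From Stdlib Require Import Reals Arith.
Open Scope R_scope.

(* Party 1 wins iff p1/(a1+c) >= p2/(a2+c) (ties to party 1), with
   the c = 0 convention: p1/0 > p2/0, and p_i/0 > p_j/k for k > 0. *)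
Definition party1_next (c : R) (p1 p2 : nat) (a1 a2 : nat) : bool :=
  if Req_EM_T c 0 then
    match a1, a2 with
    | O, _ => true
    | S _, O => false
    | S _, S _ => if Rle_dec (INR p2 / INR a2) (INR p1 / INR a1) then true else false
    end
  else
    if Rle_dec (INR p2 / (INR a2 + c)) (INR p1 / (INR a1 + c)) then true else false.

Fixpoint seats (c : R) (p1 p2 : nat) (n : nat) : nat * nat :=
  match n with
  | O => (O, O)
  | S m => let '(a1, a2) := seats c p1 p2 m in
           if party1_next c p1 p2 a1 a2 then (S a1, a2) else (a1, S a2)
  end.

(* S_c(p1,p2): the label (1 or 2) of the (n+1)-th seat, n = 0,1,2,... *)
Definition apportionment_seq (c : R) (p1 p2 : nat) (n : nat) : nat :=
  let '(a1, a2) := seats c p1 p2 n in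
  if party1_next c p1 p2 a1 a2 then 1%nat else 2%nat.

(* Party 1 receives the next seat exactly when the integer lead
   x = p2 a1 - p1 a2 is at most c (p1 - p2), i.e. at most m = floor (c (p1 - p2)).
   Hence S_c depends only on m in {0, ..., p1 - p2}, and the lead follows the
   walk x -> x + p2 (if x <= m), x -> x - p1 (otherwise).  This walk stays in a
   window of p1 + p2 consecutive integers and is congruent to n p2 modulo
   p1 + p2; as p2 is invertible modulo p1 + p2, for i < j there is a step n at
   which both walks (thresholds i and j) sit at i + 1, where they disagree. *)

From Stdlib Require Import Reals ZArith Lia Lra.
Open Scope R_scope.

Lemma Rdiv_le_cross (a b e d : R) :
  0 < b -> 0 < d -> (a / b <= e / d <-> a * d <= e * b).
Proof.
  intros Hb Hd.
  replace (a / b) with ((a * d) / (b * d)) by (field; lra).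
  replace (e / d) with ((e * b) / (b * d)) by (field; lra).
  assert (Hbd : 0 < / (b * d)) by (apply Rinv_0_lt_compat; nra).
  unfold Rdiv; split; intro H.
  - apply Rmult_le_reg_r with (/ (b * d)); lra.
  - apply Rmult_le_compat_r; lra.
Qed.

Lemma party1_next_iff (c : R) (p1 p2 a1 a2 : nat) :
  0 <= c -> (0 < p1)%nat -> (0 < p2)%nat ->
  (party1_next c p1 p2 a1 a2 = true <->
   INR p2 * INR a1 - INR p1 * INR a2 <= c * (INR p1 - INR p2)).
Proof.
  intros Hc H1 H2.
  assert (E1 : 0 < INR p1) by (apply lt_0_INR; lia).
  assert (E2 : 0 < INR p2) by (apply lt_0_INR; lia).
  assert (cross_multiply : forall b d, 0 < b -> 0 < d ->
    ((if Rle_dec (INR p2 / b) (INR p1 / d) then true else false) = true <->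
     INR p2 * d <= INR p1 * b)).
  { intros b d Hb Hd; rewrite <- Rdiv_le_cross by assumption.
    destruct (Rle_dec _ _); split; easy. }
  unfold party1_next.
  destruct (Req_EM_T c 0) as [->|Hc0].
  - assert (HS : forall k, 0 < INR (S k)) by (intro; apply lt_0_INR; lia).
    destruct a1 as [|a1], a2 as [|a2]; rewrite ?INR_0.
    + split; intros; [lra | reflexivity].
    + pose proof (HS a2); split; intros; [nra | reflexivity].
    + pose proof (HS a1); split; intro Hnext; [discriminate | nra].
    + pose proof (HS a1); pose proof (HS a2).
      rewrite cross_multiply by assumption; split; intro; nra.
  - pose proof (pos_INR a1); pose proof (pos_INR a2).
    rewrite cross_multiply by lra; split; intro; nra.
Qed.

Definition floor_spec (x : R) (m : Z) : Prop :=
  forall z : Z, IZR z <= x <-> (z <= m)%Z.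

Lemma floor_spec_IZR (m : Z) : floor_spec (IZR m) m.
Proof. intro z; split; [apply le_IZR | apply IZR_le]. Qed.

Lemma floor_spec_Int_part (x : R) : floor_spec x (Int_part x).
Proof.
  destruct (base_Int_part x) as [Hle Hgt]; intro z; split; intro Hz.
  - destruct (Z_le_gt_dec z (Int_part x)) as [h|h]; [exact h|].
    assert (IZR (Int_part x + 1) <= IZR z) by (apply IZR_le; lia).
    rewrite plus_IZR in *; lra.
  - apply IZR_le in Hz; lra.
Qed.

Definition lead (p1 p2 a1 a2 : nat) : Z :=
  (Z.of_nat p2 * Z.of_nat a1 - Z.of_nat p1 * Z.of_nat a2)%Z.

Lemma party1_next_lead (c : R) (p1 p2 a1 a2 : nat) (m : Z) :
  0 <= c -> (0 < p1)%nat -> (0 < p2)%nat ->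
  floor_spec (c * (INR p1 - INR p2)) m ->
  party1_next c p1 p2 a1 a2 = (lead p1 p2 a1 a2 <=? m)%Z.
Proof.
  intros Hc H1 H2 Hm.
  pose proof (party1_next_iff c p1 p2 a1 a2 Hc H1 H2) as Hiff.
  specialize (Hm (lead p1 p2 a1 a2)).
  unfold lead in Hm; rewrite minus_IZR, !mult_IZR, <- !INR_IZR_INZ in Hm.
  destruct (party1_next c p1 p2 a1 a2), (Z.leb_spec0 (lead p1 p2 a1 a2) m) as [h|h];
    try reflexivity.
  - exfalso; apply h, Hm, Hiff; reflexivity.
  - enough (false = true) by discriminate; apply Hiff, Hm, h.
Qed.

Fixpoint lead_walk (P1 P2 m : Z) (n : nat) : Z :=
  match n with
  | O => 0%Z
  | S k => let x := lead_walk P1 P2 m k in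
           if (x <=? m)%Z then (x + P2)%Z else (x - P1)%Z
  end.

Definition walk_label (P1 P2 m : Z) (n : nat) : nat :=
  if (lead_walk P1 P2 m n <=? m)%Z then 1%nat else 2%nat.

Section Apportionment.

Variables (c : R) (p1 p2 : nat) (m : Z).
Hypotheses (Hc : 0 <= c) (Hp1 : (0 < p1)%nat) (Hp2 : (0 < p2)%nat)
           (Hm : floor_spec (c * (INR p1 - INR p2)) m).

Lemma lead_seats (n : nat) :
  let '(a1, a2) := seats c p1 p2 n in
  lead p1 p2 a1 a2 = lead_walk (Z.of_nat p1) (Z.of_nat p2) m n.
Proof.
  induction n as [|n IH]; [unfold lead; simpl; lia|].
  simpl; destruct (seats c p1 p2 n) as [a1 a2].
  rewrite (party1_next_lead c p1 p2 a1 a2 m Hc Hp1 Hp2 Hm), IH.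
  unfold lead in *; destruct (lead_walk _ _ m n <=? m)%Z; lia.
Qed.

Lemma apportionment_seq_walk (n : nat) :
  apportionment_seq c p1 p2 n = walk_label (Z.of_nat p1) (Z.of_nat p2) m n.
Proof.
  pose proof (lead_seats n) as E.
  unfold apportionment_seq, walk_label; destruct (seats c p1 p2 n) as [a1 a2].
  rewrite (party1_next_lead c p1 p2 a1 a2 m Hc Hp1 Hp2 Hm), E; reflexivity.
Qed.

End Apportionment.

Lemma lead_walk_window (P1 P2 m : Z) (n : nat) :
  (0 < P1)%Z -> (0 < P2)%Z -> (0 <= m < P1)%Z ->
  (m - P1 < lead_walk P1 P2 m n <= m + P2)%Z.
Proof.
  intros H1 H2 Hm; induction n; simpl; [lia|].
  destruct (Z.leb_spec0 (lead_walk P1 P2 m n) m); lia.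
Qed.

Lemma lead_walk_mod (P1 P2 m : Z) (n : nat) :
  exists k, lead_walk P1 P2 m n = (Z.of_nat n * P2 - k * (P1 + P2))%Z.
Proof.
  induction n as [|n [k IH]]; [exists 0%Z; reflexivity|].
  rewrite Nat2Z.inj_succ; cbn [lead_walk].
  destruct (lead_walk P1 P2 m n <=? m)%Z; [exists k | exists (k + 1)%Z]; lia.
Qed.

Lemma multiple_hits_residue (P N r : Z) :
  (0 < N)%Z -> Z.gcd P N = 1%Z ->
  exists (n : nat) (t : Z), (Z.of_nat n * P - r = t * N)%Z.
Proof.
  intros HN G.
  destruct (Z.gcd_bezout _ _ _ G) as [a [b Hab]].
  pose proof (Z.mod_pos_bound (r * a) N HN).
  exists (Z.to_nat ((r * a) mod N)), (- (r * a / N) * P - r * b)%Z.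
  rewrite Z2Nat.id, Z.mod_eq by lia.
  transitivity ((r * a - N * (r * a / N)) * P - r * (a * P + b * N))%Z;
    [rewrite Hab | ]; ring.
Qed.

(* Both walks reach the common value [i + 1]: it lies in both windows, and a
   value of the walk in a window of width [P1 + P2] is fixed by its residue. *)
Lemma walk_labels_differ (P1 P2 i j : Z) :
  (0 < P2 < P1)%Z -> Z.gcd P1 P2 = 1%Z -> (0 <= i)%Z -> (i < j <= P1 - P2)%Z ->
  exists n, walk_label P1 P2 i n <> walk_label P1 P2 j n.
Proof.
  intros HP G Hi Hij.
  assert (G' : Z.gcd P2 (P1 + P2) = 1%Z)
    by (rewrite Z.gcd_add_diag_r, Z.gcd_comm; exact G).
  destruct (multiple_hits_residue P2 (P1 + P2) (i + 1) ltac:(lia) G') as [n [t Ht]].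
  exists n.
  assert (at_i1 : forall m, (i <= m <= P1 - P2)%Z -> lead_walk P1 P2 m n = (i + 1)%Z).
  { intros m Hm.
    pose proof (lead_walk_window P1 P2 m n ltac:(lia) ltac:(lia) ltac:(lia)) as W.
    destruct (lead_walk_mod P1 P2 m n) as [k Hk].
    assert (E : lead_walk P1 P2 m n = (i + 1 + (t - k) * (P1 + P2))%Z) by lia.
    rewrite E in W |- *.
    assert (t - k = 0)%Z as -> by nia; lia. }
  unfold walk_label; rewrite !at_i1 by lia.
  destruct (Z.leb_spec0 (i + 1) i), (Z.leb_spec0 (i + 1) j); [lia | lia | discriminate | lia].
Qed.

Definition cut_point (p1 p2 i : nat) : R := INR i / INR (p1 - p2).

Lemma cut_point_bounds (p1 p2 i : nat) :
  (p2 < p1)%nat -> (i <= p1 - p2)%nat -> 0 <= cut_point p1 p2 i <= 1.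
Proof.
  intros H Hi; unfold cut_point.
  assert (Hd : 0 < INR (p1 - p2)) by (apply lt_0_INR; lia).
  pose proof (le_INR _ _ Hi); pose proof (pos_INR i).
  split.
  - apply Rmult_le_pos; [lra | left; apply Rinv_0_lt_compat; lra].
  - apply (Rmult_le_reg_r (INR (p1 - p2))); [lra|]; field_simplify; lra.
Qed.

Lemma floor_spec_cut_point (p1 p2 i : nat) :
  (p2 < p1)%nat -> floor_spec (cut_point p1 p2 i * (INR p1 - INR p2)) (Z.of_nat i).
Proof.
  intro H; unfold cut_point.
  replace (INR i / INR (p1 - p2) * (INR p1 - INR p2)) with (IZR (Z.of_nat i)).
  - apply floor_spec_IZR.
  - assert (INR p2 < INR p1) by (apply lt_INR; exact H).
    rewrite <- INR_IZR_INZ, minus_INR by lia; field; lra.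
Qed.

Lemma apportionment_seq_cut_point (p1 p2 i : nat) (n : nat) :
  (0 < p2)%nat -> (p2 < p1)%nat -> (i <= p1 - p2)%nat ->
  apportionment_seq (cut_point p1 p2 i) p1 p2 n =
  walk_label (Z.of_nat p1) (Z.of_nat p2) (Z.of_nat i) n.
Proof.
  intros H2 H1 Hi.
  apply apportionment_seq_walk; try lia.
  - apply cut_point_bounds; assumption.
  - apply floor_spec_cut_point; assumption.
Qed.

Lemma Z_gcd_of_nat_coprime (a b : nat) :
  (0 < a)%nat -> Nat.gcd a b = 1%nat -> Z.gcd (Z.of_nat a) (Z.of_nat b) = 1%Z.
Proof.
  intros H G; destruct (Nat.gcd_bezout_pos a b H) as [u [v E]]; rewrite G in E.
  apply Z.bezout_1_gcd; exists (Z.of_nat u), (- Z.of_nat v)%Z; lia.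
Qed.

Lemma cut_point_seqs_differ (p1 p2 i j : nat) :
  (0 < p2)%nat -> (p2 < p1)%nat -> Nat.gcd p1 p2 = 1%nat ->
  (i <= p1 - p2)%nat -> (j <= p1 - p2)%nat -> i <> j ->
  exists n, apportionment_seq (cut_point p1 p2 i) p1 p2 n <>
            apportionment_seq (cut_point p1 p2 j) p1 p2 n.
Proof.
  intros H2 H1 G Hi Hj Hij.
  pose proof (Z_gcd_of_nat_coprime p1 p2 ltac:(lia) G) as HG.
  setoid_rewrite apportionment_seq_cut_point; try assumption.
  apply Nat.lt_gt_cases in Hij as [h|h].
  - apply walk_labels_differ; lia.
  - destruct (walk_labels_differ (Z.of_nat p1) (Z.of_nat p2) (Z.of_nat j) (Z.of_nat i))
      as [n Hn]; try lia.
    exists n; congruence.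
Qed.

Lemma apportionment_seq_eq_cut_point (c : R) (p1 p2 : nat) :
  0 <= c <= 1 -> (0 < p2)%nat -> (p2 < p1)%nat ->
  exists i, (i <= p1 - p2)%nat /\
    forall n, apportionment_seq (cut_point p1 p2 i) p1 p2 n = apportionment_seq c p1 p2 n.
Proof.
  intros Hc H2 H1.
  set (x := c * (INR p1 - INR p2)).
  assert (Hx : 0 <= x <= INR p1 - INR p2)
    by (pose proof (lt_INR _ _ H1); unfold x; split; nra).
  pose proof (floor_spec_Int_part x) as Hm.
  assert (Hm0 : (0 <= Int_part x)%Z) by (apply Hm, Hx).
  assert (Hm1 : (Int_part x <= Z.of_nat p1 - Z.of_nat p2)%Z).
  { apply le_IZR; rewrite minus_IZR, <- !INR_IZR_INZ.
    pose proof (proj2 (Hm _) (Z.le_refl _)); lra. }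
  exists (Z.to_nat (Int_part x)); split; [lia|]; intro n.
  rewrite apportionment_seq_cut_point, Z2Nat.id by lia.
  symmetry; apply apportionment_seq_walk; [lra | lia | lia | exact Hm].
Qed.

Theorem mainTheorem14 (p1 p2 : nat) :
  (0 < p2)%nat -> (p2 < p1)%nat -> Nat.gcd p1 p2 = 1%nat ->
  exists f : nat -> (nat -> nat),
    (forall i j, (i < p1 - p2 + 1)%nat -> (j < p1 - p2 + 1)%nat -> i <> j ->
       exists n, f i n <> f j n) /\
    (forall i, (i < p1 - p2 + 1)%nat ->
       exists c, 0 <= c <= 1 /\ forall n, f i n = apportionment_seq c p1 p2 n) /\
    (forall c, 0 <= c <= 1 ->
       exists i, (i < p1 - p2 + 1)%nat /\ forall n, f i n = apportionment_seq c p1 p2 n).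
Proof.
  intros H2 H1 G.
  exists (fun i => apportionment_seq (cut_point p1 p2 i) p1 p2).
  split; [|split].
  - intros i j Hi Hj; apply cut_point_seqs_differ; lia.
  - intros i Hi; exists (cut_point p1 p2 i).
    split; [apply cut_point_bounds; lia | reflexivity].
  - intros c Hc.
    destruct (apportionment_seq_eq_cut_point c p1 p2 Hc H2 H1) as [i [Hi E]].
    exists i; split; [lia | exact E].
Qed.
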